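(* Let $\mathscr H$ be a complex Hilbert space and $\mathbf{X},\mathbf{Y},\mathbf{Z},\mathbf{W}\in\mathbb{B}(\mathscr H)^d$. Then $$w_e\left(\begin{bmatrix}\mathbf{X}&\mathbf{Y}\\\mathbf{Z}&\mathbf{W}\end{bmatrix}\right)\ge\max\Big\{w_e(\mathbf{X}),w_e(\mathbf{W}),w_e\Big(\tfrac{\mathbf{Y}+\mathbf{Z}}{2}\Big),w_e\Big(\tfrac{\mathbf{Y}-\mathbf{Z}}{2}\Big)\Big\}$$ and $$w_e\left(\begin{bmatrix}\mathbf{X}&\mathbf{Y}\\\mathbf{Z}&\mathbf{W}\end{bmatrix}\right)\le\max\{w_e(\mathbf{X}),w_e(\mathbf{W})\}+w_e\Big(\tfrac{\mathbf{Y}+\mathbf{Z}}{2}\Big)+w_e\Big(\tfrac{\mathbf{Y}-\mathbf{Z}}{2}\Big).$$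
   Context: $\mathbb{B}(\mathscr H)$ denotes the bounded linear operators on $\mathscr H$. $w_e(\mathbf{T})=\sup\{(\sum_{k}|\langle T_kx,x\rangle|^2)^{1/2}: \|x\|=1\}$ for $\mathbf{T}=(T_1,\dots,T_d)$. Tuple sums and scalar multiples are componentwise. For $d$-tuples, $\begin{bmatrix}\mathbf{X}&\mathbf{Y}\\\mathbf{Z}&\mathbf{W}\end{bmatrix}$ denotes the $d$-tuple $\left(\begin{bmatrix}X_k&Y_k\\Z_k&W_k\end{bmatrix}\right)_{k=1}^d$ of operators on $\mathscr H\oplus\mathscr H$. *)

From HB Require Import structures.
From mathcomp Require Import all_boot all_order all_algebra.
From mathcomp Require Import all_classical all_reals.
From mathcomp Require Import complex ereal.
Local Open Scope classical_set_scope.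
Set Implicit Arguments. Unset Strict Implicit. Unset Printing Implicit Defensive.
Import Order.TTheory GRing.Theory Num.Theory.
Local Open Scope ring_scope.

Definition cabs2 (R : realType) (z : R[i]) : R := (@complex.Re R z) ^+ 2 + (@complex.Im R z) ^+ 2.

Definition is_inner_product (R : realType) (H : lmodType R[i])
    (ip : H -> H -> R[i]) : Prop :=
  [/\ forall (a : R[i]) (x y z : H), ip (a *: x + y) z = a * ip x z + ip y z,
      forall x y : H, ip y x = (ip x y)^*,
      forall x : H, 0 <= ip x x
    & forall x : H, ip x x = 0 -> x = 0].

Definition ipnorm (R : realType) (H : lmodType R[i]) (ip : H -> H -> R[i])
    (x : H) : R := Num.sqrt (@complex.Re R (ip x x)).

Definition ip_complete (R : realType) (H : lmodType R[i])
    (ip : H -> H -> R[i]) : Prop :=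
  forall u : nat -> H,
    (forall e : R, 0 < e -> exists N : nat, forall m n : nat,
        (N <= m)%N -> (N <= n)%N -> ipnorm ip (u m - u n) < e) ->
    exists l : H, forall e : R, 0 < e -> exists N : nat, forall n : nat,
        (N <= n)%N -> ipnorm ip (u n - l) < e.

Definition is_hilbert (R : realType) (H : lmodType R[i])
    (ip : H -> H -> R[i]) : Prop :=
  is_inner_product ip /\ ip_complete ip.

Definition is_bounded_op (R : realType) (H : lmodType R[i])
    (ip : H -> H -> R[i]) (T : H -> H) : Prop :=
  linear T /\ exists M : R, forall x : H, ipnorm ip (T x) <= M * ipnorm ip x.

Definition w_e (R : realType) (V : Type) (ip : V -> V -> R[i]) (d : nat)
    (T : 'I_d -> V -> V) : \bar R :=
  ereal_sup [set (Num.sqrt (\sum_(k < d) cabs2 (ip (T k x) x)))%:E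
            | x in [set x : V | ip x x = 1]].

Definition ip_sum (R : realType) (H : lmodType R[i]) (ip : H -> H -> R[i])
    (u v : H * H) : R[i] := ip u.1 v.1 + ip u.2 v.2.

Definition block_op (R : realType) (H : lmodType R[i]) (A B C D : H -> H)
    (u : H * H) : H * H := (A u.1 + B u.2, C u.1 + D u.2).

Definition half_sum (R : realType) (H : lmodType R[i]) (d : nat)
    (S T : 'I_d -> H -> H) : 'I_d -> H -> H :=
  fun k x => (2%:R : R[i])^-1 *: (S k x + T k x).
Definition half_diff (R : realType) (H : lmodType R[i]) (d : nat)
    (S T : 'I_d -> H -> H) : 'I_d -> H -> H :=
  fun k x => (2%:R : R[i])^-1 *: (S k x - T k x).

From HB Require Import structures.
From mathcomp Require Import all_boot all_order all_algebra.
From mathcomp Require Import all_classical all_reals.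
From mathcomp Require Import complex ereal.
From mathcomp Require Import ring lra.
Set Implicit Arguments. Unset Strict Implicit. Unset Printing Implicit Defensive.
Import Order.TTheory GRing.Theory Num.Theory.
Local Open Scope complex_scope.
Local Open Scope ring_scope.

(* Write q_T(x) for the vector (<T_k x, x>)_k of C^d, so that w_e T is the
   supremum of its Euclidean norm over unit vectors x.
   Lower bound: q_B(x, 0) = q_X(x), q_B(0, x) = q_W(x), and for |b| = 1 the
   unit vectors u_b = (x, b x)/sqrt 2 give (q_B(u_b) - q_B(u_(-b)))/2 =
   (b q_Y(x) + conj(b) q_Z(x))/2 (offdiag_le), which is q_S(x) for b = 1 and
   i q_D(x) for b = i.
   Upper bound: the polarization identity
     i q_B(x, y) = i q_X(x) + i q_W(y) + (i/2) (q_S(x + y) - q_S(x - y))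
                   + (1/2) (q_D(x + i y) - q_D(x - i y)),
   homogeneity and the parallelogram law bound ||q_B(x, y)|| at unit vectors
   (block_qform_le); a bookkeeping lemma in \bar R handles infinite radii. *)

Section ComplexModulus.
Variable R : realType.
Implicit Types (z w : R[i]) (c : R).

Lemma cabs2_ge0 z : 0 <= cabs2 z.
Proof. by rewrite /cabs2 addr_ge0 ?sqr_ge0. Qed.

Lemma cabs2M z w : cabs2 (z * w) = cabs2 z * cabs2 w.
Proof. by case: z w => [a b] [c e]; rewrite /cabs2 /=; ring. Qed.

Lemma cabs2_real c : cabs2 c%:C = c ^+ 2.
Proof. by rewrite /cabs2 /=; ring. Qed.

Lemma cabs2_eq0 z : cabs2 z = 0 -> z = 0.
Proof.
case: z => a b; rewrite /cabs2 /= => h.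
have -> : a = 0 by nra.
by have -> : b = 0 by nra.
Qed.

(* The weighted parallelogram inequality
   [al be |z + w|^2 <= be (al + be) |z|^2 + al (al + be) |w|^2]; summed over
   coordinates it yields the triangle inequality for the Euclidean norm. *)
Lemma cabs2D_weighted (al be : R) z w : 0 <= al -> 0 <= be ->
  al * be * cabs2 (z + w) <= be * (al + be) * cabs2 z + al * (al + be) * cabs2 w.
Proof.
case: z w => [a1 a2] [b1 b2]; rewrite /cabs2 /= => _ _; rewrite -subr_ge0.
have -> : be * (al + be) * (a1 ^+ 2 + a2 ^+ 2) + al * (al + be) * (b1 ^+ 2 + b2 ^+ 2)
    - al * be * ((a1 + b1) ^+ 2 + (a2 + b2) ^+ 2)
    = (be * a1 - al * b1) ^+ 2 + (be * a2 - al * b2) ^+ 2 by ring.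
by rewrite addr_ge0 ?sqr_ge0.
Qed.

Lemma conj_real c : (c%:C : R[i])^* = c%:C.
Proof. exact: conjc_real. Qed.

Lemma conj_i : ('i%C : R[i])^* = - 'i%C.
Proof. by apply/eqP; rewrite eq_complex /= oppr0 !eqxx. Qed.

Definition cmod z : R := Num.sqrt (cabs2 z).

Lemma cmodM z w : cmod (z * w) = cmod z * cmod w.
Proof. by rewrite /cmod cabs2M sqrtrM // cabs2_ge0. Qed.

Lemma cmodN z : cmod (- z) = cmod z.
Proof. by case: z => a b; rewrite /cmod /cabs2 /= !sqrrN. Qed.

Lemma cmod_real c : cmod c%:C = `|c|.
Proof. by rewrite /cmod cabs2_real sqrtr_sqr. Qed.

Lemma cmod_i : cmod 'i%C = 1.
Proof. by rewrite /cmod /cabs2 /= expr0n expr1n add0r sqrtr1. Qed.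

Lemma half_real : (2%:R : R[i])^-1 = (2^-1 : R)%:C.
Proof. by rewrite fmorphV /= rmorph_nat. Qed.

Lemma inv_sqrt_factor (n : R) : 0 < n -> exists2 c : R, 0 <= c & c * c * n = 1.
Proof.
move=> n_gt0; exists (Num.sqrt n)^-1; first by rewrite invr_ge0 sqrtr_ge0.
by rewrite -expr2 exprVn sqr_sqrtr ?mulVf ?gt_eqF // ltW.
Qed.

End ComplexModulus.

Section EuclideanNorm.
Variables (R : realType) (d : nat).
Implicit Types (v w : 'I_d -> R[i]) (a b : R[i]).

Definition enorm v : R := Num.sqrt (\sum_(k < d) cabs2 (v k)).

Lemma sum_cabs2_ge0 v : 0 <= \sum_(k < d) cabs2 (v k).
Proof. by apply: sumr_ge0 => k _; exact: cabs2_ge0. Qed.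

Lemma enorm_ge0 v : 0 <= enorm v.
Proof. exact: sqrtr_ge0. Qed.

Lemma enorm_sqr v : enorm v ^+ 2 = \sum_(k < d) cabs2 (v k).
Proof. by rewrite sqr_sqrtr // sum_cabs2_ge0. Qed.

Lemma enorm0 : enorm (fun=> 0) = 0.
Proof.
by rewrite /enorm big1 ?sqrtr0 // => k _; rewrite -[0]/(0%:C) cabs2_real expr0n.
Qed.

Lemma enorm_eq0 v : enorm v = 0 -> v = fun=> 0.
Proof.
move=> v0; apply/funext => k; apply: cabs2_eq0.
have /psumr_eq0P : \sum_(k < d) cabs2 (v k) = 0 by rewrite -enorm_sqr v0 expr0n.
by apply => // j _; exact: cabs2_ge0.
Qed.

Lemma enormZ a v : enorm (fun k => a * v k) = cmod a * enorm v.
Proof.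
rewrite /enorm (eq_bigr (fun k => cabs2 a * cabs2 (v k))) => [|k _]; last exact: cabs2M.
by rewrite -mulr_sumr sqrtrM // cabs2_ge0.
Qed.

Lemma enormD v w : enorm (fun k => v k + w k) <= enorm v + enorm w.
Proof.
have [/enorm_eq0 -> | v_neq0] := eqVneq (enorm v) 0.
  by rewrite enorm0 add0r; under eq_fun do rewrite add0r.
have [/enorm_eq0 -> | w_neq0] := eqVneq (enorm w) 0.
  by rewrite enorm0 addr0; under eq_fun do rewrite addr0.
have al_gt0 : 0 < enorm v by rewrite lt_def v_neq0 enorm_ge0.
have be_gt0 : 0 < enorm w by rewrite lt_def w_neq0 enorm_ge0.
set al := enorm v in al_gt0 *; set be := enorm w in be_gt0 *.
have sum_le : \sum_(k < d) cabs2 (v k + w k) <= (al + be) ^+ 2.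
  rewrite -(ler_pM2l (mulr_gt0 al_gt0 be_gt0)) mulr_sumr.
  apply: (le_trans (y := \sum_(k < d)
    (be * (al + be) * cabs2 (v k) + al * (al + be) * cabs2 (w k)))).
    by apply: ler_sum => k _; apply: cabs2D_weighted; exact: ltW.
  rewrite big_split /= -!mulr_sumr -!enorm_sqr -/al -/be.
  by rewrite le_eqVlt; apply/orP; left; apply/eqP; ring.
rewrite -(ger0_norm (addr_ge0 (ltW al_gt0) (ltW be_gt0))) -sqrtr_sqr.
by rewrite ler_sqrt // sqr_ge0.
Qed.

Lemma enorm_comb a b v w :
  enorm (fun k => a * v k + b * w k) <= cmod a * enorm v + cmod b * enorm w.
Proof. by rewrite -!enormZ; exact: enormD. Qed.

End EuclideanNorm.

Section EuclideanRadius.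
Variables (R : realType) (V : Type) (ip : V -> V -> R[i]) (d : nat).
Implicit Types (T : 'I_d -> V -> V) (x : V).

Definition qform T x : 'I_d -> R[i] := fun k => ip (T k x) x.

Local Open Scope ereal_scope.

Lemma w_e_ub T x : ip x x = 1%R -> (enorm (qform T x))%:E <= w_e ip T.
Proof. by move=> x1; apply: ereal_sup_ubound; exists x. Qed.

Lemma w_e_lub T (M : \bar R) :
  (forall x, ip x x = 1%R -> (enorm (qform T x))%:E <= M) -> w_e ip T <= M.
Proof. by move=> ubM; apply: ge_ereal_sup => _ [x x1 <-]; exact: ubM. Qed.

Lemma w_e_neqNy T x : ip x x = 1%R -> w_e ip T != -oo.
Proof. by move=> /(w_e_ub T); case: (w_e ip T). Qed.

Lemma w_e_ge_real T x (e : R) : ip x x = 1%R ->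
  (forall r, w_e ip T = r%:E -> (e <= r)%R) -> e%:E <= w_e ip T.
Proof.
move=> /(w_e_neqNy T); case: (w_e ip T) => [r _ le_er | _ _ | //].
  by rewrite lee_fin; exact: le_er.
exact: leey.
Qed.

End EuclideanRadius.

Section InnerProductSpace.
Variables (R : realType) (H : lmodType R[i]) (ip : H -> H -> R[i]).
Hypothesis ipH : is_inner_product ip.
Implicit Types (x y z : H) (a : R[i]).

Lemma ipDl x y z : ip (x + y) z = ip x z + ip y z.
Proof. by case: ipH => ipL _ _ _; rewrite -(scale1r x) ipL mul1r scale1r. Qed.

Lemma ipZl a x z : ip (a *: x) z = a * ip x z.
Proof.
case: ipH => ipL _ _ _; have := ipL a x 0 z; rewrite addr0 => ->.
have ip0 : ip 0 z = 0.
  by apply: (addrI (ip 0 z)); rewrite -ipDl !addr0.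
by rewrite ip0 addr0.
Qed.

Lemma ipC x y : ip y x = (ip x y)^*.
Proof. by case: ipH. Qed.

Lemma ipNl x z : ip (- x) z = - ip x z.
Proof. by rewrite -scaleN1r ipZl mulN1r. Qed.

Lemma ipDr x y z : ip z (x + y) = ip z x + ip z y.
Proof. by rewrite ipC ipDl rmorphD /= -!ipC. Qed.

Lemma ipZr a x z : ip z (a *: x) = a^* * ip z x.
Proof. by rewrite ipC ipZl rmorphM /= -!ipC. Qed.

Lemma ipNr x z : ip z (- x) = - ip z x.
Proof. by rewrite -scaleN1r ipZr rmorphN1 mulN1r. Qed.

Lemma ip0r z : ip z 0 = 0.
Proof. by rewrite -(scale0r 0) ipZr rmorph0 mul0r. Qed.

Definition sqnorm x : R := complex.Re (ip x x).

Lemma ipxx x : ip x x = (sqnorm x)%:C.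
Proof.
case: ipH => _ _ ip_ge0 _; move: (ip_ge0 x); rewrite lecE => /andP[/eqP Im0 _].
by rewrite /sqnorm; case: (ip x x) Im0 => a b /= ->.
Qed.

Lemma sqnorm_ge0 x : 0 <= sqnorm x.
Proof. by case: ipH => _ _ ip_ge0 _; move: (ip_ge0 x); rewrite lecE => /andP[]. Qed.

Lemma sqnorm_eq0 x : sqnorm x = 0 -> x = 0.
Proof. by case: ipH => _ _ _ ip_eq0 x0; apply: ip_eq0; rewrite ipxx x0. Qed.

Lemma sqnormZ_real (c : R) x : sqnorm (c%:C *: x) = c ^+ 2 * sqnorm x.
Proof. by apply: complexI; rewrite -ipxx ipZl ipZr conj_real mulrA ipxx -!rmorphM. Qed.

Lemma sqnorm_gt0 x : sqnorm x != 0 -> 0 < sqnorm x.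
Proof. by rewrite lt_def sqnorm_ge0 andbT. Qed.

Lemma unit_scale (c : R) x : c * c * sqnorm x = 1 -> ip (c%:C *: x) (c%:C *: x) = 1.
Proof. by move=> ccx; rewrite ipxx sqnormZ_real expr2 ccx. Qed.

Lemma parallelogram x y : sqnorm (x + y) + sqnorm (x - y) = 2%:R * (sqnorm x + sqnorm y).
Proof.
rewrite mulr_natl mulr2n; apply: complexI; rewrite !rmorphD /= -!ipxx.
by rewrite !(ipDl, ipNl, ipDr, ipNr); ring.
Qed.

Lemma sqnorm_i y : sqnorm ('i%C *: y) = sqnorm y.
Proof.
apply: complexI; rewrite -!ipxx ipZl ipZr conj_i mulrA mulrN -expr2 sqr_i.
by rewrite opprK mul1r.
Qed.

Section LinearOperator.
Variable f : H -> H.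
Hypothesis f_lin : linear f.

Lemma lin0 : f 0 = 0.
Proof.
have := f_lin 1 0 0; rewrite !scale1r addr0 => f00.
by apply: (addrI (f 0)); rewrite addr0 -f00.
Qed.

Lemma linZ a x : f (a *: x) = a *: f x.
Proof. by rewrite -[a *: x]addr0 f_lin lin0 addr0. Qed.

Lemma linD x y : f (x + y) = f x + f y.
Proof. by rewrite -(scale1r x) f_lin !scale1r. Qed.

Lemma linN x : f (- x) = - f x.
Proof. by rewrite -scaleN1r linZ scaleN1r. Qed.

End LinearOperator.

Variable d : nat.
Implicit Type T : 'I_d -> H -> H.

Lemma qformZ T (T_lin : forall k, linear (T k)) a x :
  qform ip T (a *: x) = fun k => a * a^* * qform ip T x k.
Proof. by apply/funext => k; rewrite /qform linZ // ipZl ipZr mulrA. Qed.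

Lemma qform0 T : qform ip T 0 = fun=> 0.
Proof. by apply/funext => k; rewrite /qform ip0r. Qed.

Lemma qform_le T (T_lin : forall k, linear (T k)) (r : R) :
  w_e ip T = r%:E -> forall x, enorm (qform ip T x) <= r * sqnorm x.
Proof.
move=> wT x; have [/sqnorm_eq0 -> | x_neq0] := eqVneq (sqnorm x) 0.
  by rewrite qform0 enorm0 /sqnorm ip0r mulr0.
have [c c_ge0 ccn] := inv_sqrt_factor (sqnorm_gt0 x_neq0).
have := w_e_ub T (unit_scale ccn); rewrite wT lee_fin qformZ // conj_real -rmorphM.
rewrite enormZ cmod_real ger0_norm ?mulr_ge0 // => le_r.
have -> : enorm (qform ip T x) = sqnorm x * (c * c * enorm (qform ip T x)).
  by rewrite mulrA [sqnorm x * _]mulrC ccn mul1r.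
by rewrite [r * _]mulrC ler_wpM2l // sqnorm_ge0.
Qed.

Lemma ip_sum_xx x y : ip_sum ip (x, y) (x, y) = (sqnorm x + sqnorm y)%:C.
Proof. by rewrite /ip_sum /= !ipxx rmorphD. Qed.

Lemma unit_of_sum_unit x y : ip_sum ip (x, y) (x, y) = 1 -> exists u, ip u u = 1.
Proof.
rewrite ip_sum_xx -[1]/(1%:C) => /complexI nxy1.
have [v v_neq0] : exists v, sqnorm v != 0.
  have [x0 | ] := eqVneq (sqnorm x) 0; last by exists x.
  by exists y; have -> : sqnorm y = 1 by rewrite -nxy1 x0 add0r.
have [c _ ccv] := inv_sqrt_factor (sqnorm_gt0 v_neq0).
by exists (c%:C *: v); exact: unit_scale.
Qed.

Lemma qform_pair_le T (T_lin : forall k, linear (T k)) (r : R) c u v :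
  w_e ip T = r%:E -> cmod c = 2^-1 ->
  enorm (fun k => c * qform ip T u k + - c * qform ip T v k)
    <= r * (2^-1 * (sqnorm u + sqnorm v)).
Proof.
move=> wT c_half; apply: le_trans (enorm_comb _ _ _ _) _.
rewrite cmodN c_half -mulrDr mulrCA; apply: ler_wpM2l; first by rewrite invr_ge0 ler0n.
by rewrite mulrDr lerD // qform_le.
Qed.

Section BlockOperator.
Variables X Y Z W : 'I_d -> H -> H.
Hypotheses (X_lin : forall k, linear (X k)) (Y_lin : forall k, linear (Y k))
  (Z_lin : forall k, linear (Z k)) (W_lin : forall k, linear (W k)).

Local Notation B := (fun k => block_op (X k) (Y k) (Z k) (W k)).
Local Notation ipB := (ip_sum ip).

Lemma qform_block_l x : qform ipB B (x, 0) = qform ip X x.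
Proof.
apply/funext => k; rewrite /qform /ip_sum /= (lin0 (Y_lin k)) (lin0 (W_lin k)).
by rewrite !addr0 ip0r addr0.
Qed.

Lemma qform_block_r y : qform ipB B (0, y) = qform ip W y.
Proof.
apply/funext => k; rewrite /qform /ip_sum /= (lin0 (X_lin k)) (lin0 (Z_lin k)).
by rewrite !add0r ip0r add0r.
Qed.

Lemma qform_block_diag a b x : qform ipB B (a *: x, (a * b) *: x) =
  fun k => a * a^* * (qform ip X x k + b * qform ip Y x k
                      + b^* * qform ip Z x k + b * b^* * qform ip W x k).
Proof.
apply/funext => k; rewrite /qform /ip_sum /=.
rewrite !(linZ (X_lin k), linZ (Y_lin k), linZ (Z_lin k), linZ (W_lin k)).
by rewrite !(ipDl, ipZl, ipZr) rmorphM; ring.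
Qed.

(* For |b| = 1, (1/2)(b <Y_k x, x> + conj(b) <Z_k x, x>) is the difference of
   the quadratic forms of the block tuple at the unit vectors (x, +-b x)/sqrt 2,
   halved; hence its Euclidean norm is at most w_e of the block tuple. *)
Lemma offdiag_le b x : b * b^* = 1 -> ip x x = 1 ->
  ((enorm (fun k => (2%:R)^-1 * (b * qform ip Y x k + b^* * qform ip Z x k)))%:E
    <= w_e ipB B)%E.
Proof.
move=> b1 x1; have [c c_ge0 cc2] := inv_sqrt_factor (ltr0n R 2).
pose u b := (c%:C *: x, (c%:C * b) *: x).
have cc_half : c%:C * (c%:C)^* = (2%:R : R[i])^-1.
  rewrite conj_real -rmorphM half_real; congr (_%:C).
  have two_neq0 : (2%:R : R) != 0 by rewrite pnatr_eq0.
  by apply: (mulIf two_neq0); rewrite cc2 mulVf.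
have u1 b' : b' * b'^* = 1 -> ipB (u b') (u b') = 1.
  move=> b'1; rewrite /ip_sum /= !(ipZl, ipZr) x1 rmorphM.
  transitivity (c%:C * (c%:C)^* * (1 + b' * b'^*)); first by ring.
  by rewrite b'1 cc_half mulVf // pnatr_eq0.
have bN1 : - b * (- b)^* = 1 by rewrite rmorphN mulrNN.
have -> : (fun k => (2%:R)^-1 * (b * qform ip Y x k + b^* * qform ip Z x k))
    = (fun k => (2%:R)^-1 * qform ipB B (u b) k
                + - (2%:R)^-1 * qform ipB B (u (- b)) k).
  apply/funext => k; rewrite !qform_block_diag cc_half rmorphN mulrNN b1 /=.
  by field.
apply: (w_e_ge_real (u1 _ b1)) => r wB.
have := w_e_ub B (u1 _ b1); have := w_e_ub B (u1 _ bN1); rewrite wB !lee_fin.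
move=> le1 le2; apply: le_trans (enorm_comb _ _ _ _) _.
rewrite cmodN half_real cmod_real ger0_norm ?invr_ge0 ?ler0n //; lra.
Qed.

Lemma w_e_X_le : (w_e ip X <= w_e ipB B)%E.
Proof.
apply: w_e_lub => x x1; rewrite -qform_block_l; apply: w_e_ub.
by rewrite /ip_sum /= x1 ip0r addr0.
Qed.

Lemma w_e_W_le : (w_e ip W <= w_e ipB B)%E.
Proof.
apply: w_e_lub => y y1; rewrite -qform_block_r; apply: w_e_ub.
by rewrite /ip_sum /= y1 ip0r add0r.
Qed.

Lemma w_e_half_sum_le : (w_e ip (half_sum Y Z) <= w_e ipB B)%E.
Proof.
apply: w_e_lub => x x1.
have -> : qform ip (half_sum Y Z) x
    = fun k => (2%:R)^-1 * (1 * qform ip Y x k + 1^* * qform ip Z x k).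
  by apply/funext => k; rewrite /qform /half_sum ipZl ipDl rmorph1 !mul1r.
by apply: offdiag_le => //; rewrite rmorph1 mulr1.
Qed.

Lemma w_e_half_diff_le : (w_e ip (half_diff Y Z) <= w_e ipB B)%E.
Proof.
apply: w_e_lub => x x1.
have -> : qform ip (half_diff Y Z) x = fun k => - 'i%C * ((2%:R)^-1
    * ('i%C * qform ip Y x k + ('i%C)^* * qform ip Z x k)).
  apply/funext => k; rewrite /qform /half_diff ipZl ipDl ipNl conj_i.
  transitivity ((2%:R)^-1 * - ('i%C * 'i%C) * (ip (Y k x) x - ip (Z k x) x)).
    by rewrite -expr2 sqr_i opprK mulr1.
  by ring.
rewrite enormZ cmodN cmod_i mul1r.
by apply: offdiag_le => //; rewrite conj_i mulrN -expr2 sqr_i opprK.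
Qed.

Lemma half_sum_lin k : linear (half_sum Y Z k).
Proof.
move=> a u v; rewrite /half_sum (Y_lin k) (Z_lin k) !scalerDr !scalerA (mulrC _ a).
by rewrite addrACA.
Qed.

Lemma half_diff_lin k : linear (half_diff Y Z k).
Proof.
move=> a u v; rewrite /half_diff (Y_lin k) (Z_lin k) opprD !scalerDr !scalerA.
by rewrite (mulrC _ a) addrACA scalerN scalerA (mulrC _ a) -scalerN.
Qed.

Lemma polarization x y : (fun k => 'i%C * qform ipB B (x, y) k) = fun k =>
    ('i%C * qform ip X x k + 'i%C * qform ip W y k)
  + ('i%C / 2%:R * qform ip (half_sum Y Z) (x + y) k
     + - ('i%C / 2%:R) * qform ip (half_sum Y Z) (x - y) k)
  + ((2%:R)^-1 * qform ip (half_diff Y Z) (x + 'i%C *: y) k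
     + - (2%:R)^-1 * qform ip (half_diff Y Z) (x - 'i%C *: y) k).
Proof.
apply/funext => k; rewrite /qform /ip_sum /half_sum /half_diff /=.
rewrite !(linD (Y_lin k), linD (Z_lin k), linN (Y_lin k), linN (Z_lin k)).
rewrite !(linZ (Y_lin k), linZ (Z_lin k)).
by rewrite !(ipZl, ipDl, ipNl, ipDr, ipNr, ipZr) conj_i; field.
Qed.

Lemma block_qform_le (rX rW rS rD : R) :
  w_e ip X = rX%:E -> w_e ip W = rW%:E ->
  w_e ip (half_sum Y Z) = rS%:E -> w_e ip (half_diff Y Z) = rD%:E ->
  forall x y, ipB (x, y) (x, y) = 1 ->
  enorm (qform ipB B (x, y)) <= Num.max rX rW + rS + rD.
Proof.
move=> wX wW wS wD x y xy1.
have nxy1 : sqnorm x + sqnorm y = 1 by apply: complexI; rewrite -ip_sum_xx.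
have cmod_half : cmod (2%:R : R[i])^-1 = 2^-1.
  by rewrite half_real cmod_real ger0_norm // invr_ge0 ler0n.
have mean_par u v : 2^-1 * (sqnorm (u + v) + sqnorm (u - v)) = sqnorm u + sqnorm v.
  by rewrite parallelogram mulrA mulVf ?pnatr_eq0 // mul1r.
rewrite -[enorm _]mul1r -cmod_i -enormZ polarization.
apply: le_trans (enormD _ _) _; apply: lerD; last first.
  apply: le_trans (qform_pair_le half_diff_lin _ _ wD cmod_half) _.
  by rewrite mean_par sqnorm_i nxy1 mulr1.
apply: le_trans (enormD _ _) _; apply: lerD; last first.
  have cmod_ihalf : cmod ('i%C / 2%:R : R[i]) = 2^-1 by rewrite cmodM cmod_i mul1r.
  apply: le_trans (qform_pair_le half_sum_lin _ _ wS cmod_ihalf) _.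
  by rewrite mean_par nxy1 mulr1.
apply: le_trans (enorm_comb _ _ _ _) _; rewrite cmod_i !mul1r.
have m_ge : Num.max rX rW = Num.max rX rW * (sqnorm x + sqnorm y) by rewrite nxy1 mulr1.
rewrite m_ge mulrDr; apply: lerD.
  apply: le_trans (qform_le X_lin wX x) _.
  by apply: ler_wpM2r; rewrite ?sqnorm_ge0 // le_max lexx.
apply: le_trans (qform_le W_lin wW y) _.
by apply: ler_wpM2r; rewrite ?sqnorm_ge0 // le_max lexx orbT.
Qed.

End BlockOperator.

End InnerProductSpace.

Local Open Scope ereal_scope.

Lemma fin_le_maxe_add (R : realType) (e : R) (a b c d : \bar R) :
  a != -oo -> b != -oo -> c != -oo -> d != -oo ->
  (forall ra rb rc rd, a = ra%:E -> b = rb%:E -> c = rc%:E -> d = rd%:E ->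
     (e <= Num.max ra rb + rc + rd)%R) ->
  e%:E <= maxe a b + c + d.
Proof.
case: a => [ra| |] // _; case: b => [rb| |] // _; case: c => [rc| |] // _;
  case: d => [rd| |] // _ le_e; rewrite ?maxye ?maxey ?addye ?addey ?leey //;
  rewrite -?EFin_max -?EFinD //.
by rewrite lee_fin; exact: le_e.
Qed.

Theorem mainTheorem18 (R : realType) (H : lmodType R[i]) (ip : H -> H -> R[i])
  (hH : is_hilbert ip) (d : nat) (X Y Z W : 'I_d -> H -> H)
  (hX : forall k, is_bounded_op ip (X k)) (hY : forall k, is_bounded_op ip (Y k))
  (hZ : forall k, is_bounded_op ip (Z k)) (hW : forall k, is_bounded_op ip (W k)) :
  let B := fun k => block_op (X k) (Y k) (Z k) (W k) in
  maxe (maxe (w_e ip X) (w_e ip W))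
       (maxe (w_e ip (half_sum Y Z)) (w_e ip (half_diff Y Z)))
    <= w_e (ip_sum ip) B
  /\ w_e (ip_sum ip) B
    <= maxe (w_e ip X) (w_e ip W) + w_e ip (half_sum Y Z) + w_e ip (half_diff Y Z).
Proof.
move=> B; have [ipH _] := hH.
have lin (T : 'I_d -> H -> H) :
    (forall k, is_bounded_op ip (T k)) -> forall k, linear (T k).
  by move=> T_bdd k; case: (T_bdd k).
have [[[lX lY] lZ] lW] := (lin _ hX, lin _ hY, lin _ hZ, lin _ hW).
split.
  by rewrite !ge_max !(w_e_X_le, w_e_W_le, w_e_half_sum_le, w_e_half_diff_le).
apply: w_e_lub => -[x y] xy1.
have [u u1] := unit_of_sum_unit ipH xy1.
apply: fin_le_maxe_add; try exact: w_e_neqNy u1.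
by move=> rX rW rS rD wX wW wS wD; exact: (block_qform_le ipH lX lY lZ lW).
Qed.
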